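(* Let $n\ge p$, let $\mathcal X\in\mathrm{St}(n,p,l)$, and let $\hat{\mathcal X}=L(\mathcal X)$. For each $i\in\{1,\dots,l\}$ let $\hat X^{(i)}_\perp\in\mathbb C^{n\times(n-p)}$ be any matrix whose column space is the orthogonal complement (in $\mathbb C^n$) of the column space of $\hat X^{(i)}$, let $\hat{\mathcal X}_\perp$ be the complex tensor with frontal slices $\hat X^{(i)}_\perp$, and let $\mathcal X_\perp=L^{-1}(\hat{\mathcal X}_\perp)$. Then the tangent space of the embedded submanifold $\mathrm{St}(n,p,l)\subset\mathbb R^{n\times p\times l}$ at $\mathcal X$ is $$T_{\mathcal X}\mathrm{St}(n,p,l)=\Big\{\mathcal X*\mathcal W+\mathcal X_\perp*\mathcal B\in\mathbb R^{n\times p\times l}\ :\ \mathcal W\in\mathbb R^{p\times p\times l}\text{ skew-symmetric},\ \mathcal B\in\mathbb R^{(n-p)\times p\times l}\Big\}.$$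
   Context: For $\mathcal A\in\mathbb R^{n\times p\times l}$ (or complex), $A^{(i)}=\mathcal A(:,:,i)$ are its frontal slices. $\operatorname{bcirc}(\mathcal A)$ is the $nl\times pl$ block circulant matrix whose $(i,j)$ block is $A^{(((i-j)\bmod l)+1)}$; $\operatorname{unfold}(\mathcal A)$ stacks $A^{(1)},\dots,A^{(l)}$ vertically, $\operatorname{fold}$ is its inverse. The t-product is $\mathcal A*\mathcal B=\operatorname{fold}(\operatorname{bcirc}(\mathcal A)\operatorname{unfold}(\mathcal B))$ for $\mathcal A$ of size $n\times p\times l$, $\mathcal B$ of size $p\times m\times l$. The transpose $\mathcal A^\top\in\mathbb R^{p\times n\times l}$ has frontal slices $(A^{(1)})^\top,(A^{(l)})^\top,\dots,(A^{(2)})^\top$. The identity tensor $\mathcal I$ has first frontal slice the identity matrix and other slices zero. $\mathrm{St}(n,p,l)=\{\mathcal X\in\mathbb R^{n\times p\times l}:\mathcal X^\top*\mathcal X=\mathcal I\}$ ($n\ge p$), an embedded submanifold of $\mathbb R^{n\times p\times l}$. A tensor $\mathcal W\in\mathbb R^{p\times p\times l}$ is skew-symmetric if $\mathcal W^\top=-\mathcal W$. The discrete Fourier transform $L(\mathcal A)=\hat{\mathcal A}\in\mathbb C^{n\times p\times l}$ has frontal slices $\hat A^{(k)}=\sum_{j=1}^l\omega^{(k-1)(j-1)}A^{(j)}$, $\omega=e^{-2\pi\mathrm i/l}$, and $L^{-1}$ is its inverse; $\mathcal C=\mathcal A*\mathcal B$ iff $\hat C^{(k)}=\hat A^{(k)}\hat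 B^{(k)}$ for all $k$.
   Formalization: $\mathcal X_\perp$ is taken as a real tensor in $\mathbb R^{n\times(n-p)\times l}$ with each $\hat X^{(i)}_\perp$ spanning the orthogonal complement of the column space of $\hat X^{(i)}$, so only choices of $\hat{\mathcal X}_\perp$ with real $L^{-1}(\hat{\mathcal X}_\perp)$ are allowed. The statement above fails without it. *)

From HB Require Import structures.
From mathcomp Require Import all_boot all_order all_algebra.
From mathcomp Require Import all_classical all_reals all_analysis.
From mathcomp Require Import complex.
Set Implicit Arguments. Unset Strict Implicit. Unset Printing Implicit Defensive.
Import Order.TTheory GRing.Theory Num.Theory.
Import numFieldNormedType.Exports.
Local Open Scope classical_set_scope.
Local Open Scope ring_scope.

(* A third-order tensor of size n x p x l is given by its l frontal slices,
   indexed 0..l-1 (slice k here is A^{(k+1)} in the paper). *)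
Definition tensor (K : Type) (n p l : nat) := 'I_l -> 'M[K]_(n, p).

Lemma osub_proof (l : nat) (k j : 'I_l) : ((k + (l - j)) %% l < l)%N.
Proof. by rewrite ltn_pmod // (leq_ltn_trans (leq0n _) (ltn_ord k)). Qed.

Definition osub (l : nat) (k j : 'I_l) : 'I_l := Ordinal (osub_proof k j).

Section TensorOps.
Variable K : pzRingType.

(* t-product: fold(bcirc(A) unfold(B)); block (k,j) of bcirc(A) is slice (k-j) mod l *)
Definition tprod (n p m l : nat) (A : tensor K n p l) (B : tensor K p m l)
  : tensor K n m l :=
  fun k => \sum_(j < l) A (osub k j) *m B j.

(* transpose: slices A1^T, Al^T, ..., A2^T, i.e. slice k is (A_{(0-k) mod l})^T;
   osub k k is the index 0 *)
Definition ttr (n p l : nat) (A : tensor K n p l) : tensor K p n l :=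
  fun k => (A (osub (osub k k) k))^T.

Definition tadd (n p l : nat) (A B : tensor K n p l) : tensor K n p l :=
  fun k => A k + B k.

Definition topp (n p l : nat) (A : tensor K n p l) : tensor K n p l :=
  fun k => - A k.

Definition tid (p l : nat) : tensor K p p l :=
  fun k => if val k == 0%N then 1%:M else 0.

End TensorOps.

Definition Stiefel (R : pzRingType) (n p l : nat) : set (tensor R n p l) :=
  [set X | tprod (ttr X) X = @tid R p l].

Definition tskew (R : pzRingType) (p l : nat) (W : tensor R p p l) : Prop :=
  ttr W = topp W.

Definition omega (R : realType) (l : nat) : R[i] :=
  Complex (cos (2 * pi / l%:R)) (- sin (2 * pi / l%:R)).

Definition dft (R : realType) (n p l : nat) (A : tensor R n p l)
  : tensor R[i] n p l :=
  fun k => \sum_(j < l) (omega R l ^+ (k * j)%N) *: map_mx (fun x => Complex x 0) (A j).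

Definition tangent_space (R : realType) (n p l : nat)
  (S : set (tensor R n p l)) (X : tensor R n p l) : set (tensor R n p l) :=
  [set V : tensor R n p l | exists c : R -> tensor R n p l,
     [/\ c 0 = X,
         exists2 e : R, 0 < e & forall t : R, `|t| < e -> S (c t)
       & forall (k : 'I_l) (i : 'I_n) (j : 'I_p),
           is_derive (0 : R) (1 : R) (fun t : R => c t k i j) (V k i j)]].

(* Tangent vectors are skew: differentiating [c(t)^T * c(t) = I] at [t = 0] gives
   [V^T * X + X^T * V = 0].  Slice by slice in the Fourier domain the columns of
   [X] and [X_perp] are orthogonal and together span [C^n]; hence
   [X^T * X_perp = 0] and [G = X * X^T + X_perp * X_perp^T] is injective, thus
   invertible, and [V = G * (G^-1 * V)] splits as [X * W + X_perp * B] with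
   [W = X^T * V] skew.
   Conversely, [A = X W X^T + X_perp B X^T - X B^T X_perp^T] is skew with
   [A * X = X * W + X_perp * B], and the Cayley curve
   [(I - t/2 A)^-1 (I + t/2 A) X] stays on the Stiefel manifold with that
   velocity at [0]; [I - s A] is invertible because
   [(I - s A)^T (I - s A) = I + s^2 A^T A]. *)

From HB Require Import structures.
From mathcomp Require Import all_boot all_order all_algebra.
From mathcomp Require Import all_classical all_reals all_analysis.
From mathcomp Require Import complex ring lra.
Import Order.TTheory GRing.Theory Num.Theory.
Local Open Scope ring_scope.
Set Implicit Arguments. Unset Strict Implicit. Unset Printing Implicit Defensive.

Local Notation "A ** B" := (tprod A B) (at level 40, left associativity).

Lemma osubE (l : nat) (k j : 'I_l.+1) : osub k j = k - j.
Proof. by apply: val_inj => /=; rewrite modnDmr. Qed.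

Lemma ttrE (K : pzRingType) (n p l : nat) (A : tensor K n p l.+1) k :
  ttr A k = (A (- k))^T.
Proof. by rewrite /ttr !osubE subrr sub0r. Qed.

Lemma tprodE (K : pzRingType) (n p m l : nat)
    (A : tensor K n p l.+1) (B : tensor K p m l.+1) k :
  (A ** B) k = \sum_(j < l.+1) A (k - j) *m B j.
Proof. by apply: eq_bigr => j _; rewrite osubE. Qed.

Lemma tidE (K : pzRingType) (p l : nat) (k : 'I_l.+1) :
  @tid K p l.+1 k = if k == 0 then 1%:M else 0.
Proof. by case: k => [[|k] ?]. Qed.

Section TensorRing.
Variables (K : pzRingType) (l : nat).
Local Notation L := l.+1.
Local Notation tid := (@tid K _ L).
Implicit Types (n p q r : nat).

Lemma tprodA n p q r (A : tensor K n p L) (B : tensor K p q L) (C : tensor K q r L) :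
  A ** B ** C = A ** (B ** C).
Proof.
apply: funext => k; rewrite !tprodE.
under eq_bigr do rewrite tprodE mulmx_suml.
under [RHS]eq_bigr do rewrite tprodE mulmx_sumr.
rewrite [RHS]exchange_big /=; apply: eq_bigr => m _.
rewrite [RHS](reindex_inj (addIr m)) /=; apply: eq_bigr => j _.
by rewrite mulmxA addrK opprD addrA [_ - j - m]addrAC.
Qed.

Lemma tprodDl n p q (A A' : tensor K n p L) (B : tensor K p q L) :
  (A + A') ** B = A ** B + A' ** B.
Proof.
apply: funext => k; rewrite !fctE !tprodE -big_split /=.
by apply: eq_bigr => j _; rewrite mulmxDl.
Qed.

Lemma tprodDr n p q (A : tensor K n p L) (B B' : tensor K p q L) :
  A ** (B + B') = A ** B + A ** B'.
Proof.
apply: funext => k; rewrite !fctE !tprodE -big_split /=.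
by apply: eq_bigr => j _; rewrite mulmxDr.
Qed.

Lemma tprodNl n p q (A : tensor K n p L) (B : tensor K p q L) : (- A) ** B = - (A ** B).
Proof.
apply: funext => k; rewrite !fctE !tprodE -sumrN.
by apply: eq_bigr => j _; rewrite mulNmx.
Qed.

Lemma tprodNr n p q (A : tensor K n p L) (B : tensor K p q L) : A ** (- B) = - (A ** B).
Proof.
apply: funext => k; rewrite !fctE !tprodE -sumrN.
by apply: eq_bigr => j _; rewrite mulmxN.
Qed.

Lemma tprodBl n p q (A A' : tensor K n p L) (B : tensor K p q L) :
  (A - A') ** B = A ** B - A' ** B.
Proof. by rewrite tprodDl tprodNl. Qed.

Lemma tprodBr n p q (A : tensor K n p L) (B B' : tensor K p q L) :
  A ** (B - B') = A ** B - A ** B'.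
Proof. by rewrite tprodDr tprodNr. Qed.

Lemma tprod0l n p q (B : tensor K p q L) : (0 : tensor K n p L) ** B = 0.
Proof. by apply: funext => k; rewrite tprodE big1 // => j _; rewrite mul0mx. Qed.

Lemma tprod0r n p q (A : tensor K n p L) : A ** (0 : tensor K p q L) = 0.
Proof. by apply: funext => k; rewrite tprodE big1 // => j _; rewrite mulmx0. Qed.

Lemma tprodZl n p q a (A : tensor K n p L) (B : tensor K p q L) :
  (a *: A) ** B = a *: (A ** B).
Proof.
apply: funext => k; rewrite !fctE !tprodE scaler_sumr.
by apply: eq_bigr => j _; rewrite scalemxAl.
Qed.

Lemma tprod1l n p (A : tensor K n p L) : tid ** A = A.
Proof.
apply: funext => k; rewrite tprodE (bigD1 k) //= big1 ?addr0.
  by rewrite tidE subrr eqxx mul1mx.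
by move=> j hj; rewrite tidE subr_eq0 eq_sym (negbTE hj) mul0mx.
Qed.

Lemma tprod1r n p (A : tensor K n p L) : A ** tid = A.
Proof.
apply: funext => k; rewrite tprodE (bigD1 0) //= big1 ?addr0.
  by rewrite tidE eqxx subr0 mulmx1.
by move=> j hj; rewrite tidE (negbTE hj) mulmx0.
Qed.

Lemma ttrK n p : cancel (@ttr K n p L) (@ttr K p n L).
Proof. by move=> A; apply: funext => k; rewrite !ttrE opprK trmxK. Qed.

Lemma ttrD n p (A B : tensor K n p L) : ttr (A + B) = ttr A + ttr B.
Proof. by apply: funext => k; rewrite !fctE !ttrE linearD. Qed.

Lemma ttrN n p (A : tensor K n p L) : ttr (- A) = - ttr A.
Proof. by apply: funext => k; rewrite !fctE !ttrE linearN. Qed.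

Lemma ttrB n p (A B : tensor K n p L) : ttr (A - B) = ttr A - ttr B.
Proof. by rewrite ttrD ttrN. Qed.

Lemma ttr0 n p : ttr (0 : tensor K n p L) = 0.
Proof. by apply: funext => k; rewrite ttrE trmx0. Qed.

Lemma ttr_tid p : ttr tid = tid :> tensor K p p L.
Proof.
apply: funext => k; rewrite ttrE !tidE oppr_eq0.
by case: eqP => _; rewrite ?trmx1 ?trmx0.
Qed.

End TensorRing.

Section TensorComRing.
Variables (K : comPzRingType) (l : nat).
Local Notation L := l.+1.
Implicit Types (n p q : nat).

Lemma tprodZr n p q a (A : tensor K n p L) (B : tensor K p q L) :
  A ** (a *: B) = a *: (A ** B).
Proof.
apply: funext => k; rewrite !fctE !tprodE scaler_sumr.
by apply: eq_bigr => j _; rewrite scalemxAr.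
Qed.

Lemma ttrZ n p a (A : tensor K n p L) : ttr (a *: A) = a *: ttr A.
Proof. by apply: funext => k; rewrite !fctE !ttrE linearZ. Qed.

Lemma ttr_tprod n p q (A : tensor K n p L) (B : tensor K p q L) :
  ttr (A ** B) = ttr B ** ttr A.
Proof.
apply: funext => k; rewrite ttrE !tprodE linear_sum.
rewrite [RHS](reindex_inj (addrI k)) /=.
apply: eq_bigr => j _; rewrite trmx_mul !ttrE.
by rewrite opprB [k + j]addrC addrK opprD [- j - k]addrC.
Qed.

End TensorComRing.

Section Invertibility.
Variables (F : fieldType) (m l : nat).
Local Notation L := l.+1.
Local Notation tid := (@tid F m L).
Local Notation vT := {ffun 'I_L -> 'M[F]_m}.

(* [{ffun _ -> _}] carries the finite-dimensional vector space structure that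
   plain functions lack *)
Definition tprod_ffun (Y : tensor F m m L) (Z : vT) : vT := [ffun k => (Y ** Z) k].

Fact tprod_ffun_is_semilinear Y : semilinear (tprod_ffun Y).
Proof.
split=> [a A|A B]; apply/ffunP => k; rewrite !ffunE /= !tprodE.
  by rewrite scaler_sumr; apply: eq_bigr => j _; rewrite ffunE scalemxAr.
by rewrite -big_split; apply: eq_bigr => j _; rewrite ffunE mulmxDr.
Qed.
HB.instance Definition _ Y :=
  GRing.isSemilinear.Build F vT vT _ (tprod_ffun Y) (tprod_ffun_is_semilinear Y).

Lemma tprod_inj_rinv (Y : tensor F m m L) :
  (forall Z : tensor F m m L, Y ** Z = 0 -> Z = 0) -> exists N, Y ** N = tid.
Proof.
move=> Y_inj; pose f : 'End(vT) := linfun (tprod_ffun Y).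
have kerf0 : lker f == 0%VS.
  apply/lker0P => Z Z'; rewrite !lfunE /= => /ffunP eqYZ.
  have /Y_inj eqZ : Y ** (fun j => (Z - Z') j) = 0.
    apply: funext => k; rewrite tprodE.
    under eq_bigr do rewrite !ffunE mulmxBr.
    by rewrite sumrB -!tprodE; have := eqYZ k; rewrite !ffunE => ->; rewrite subrr.
  apply/ffunP => k; have /= /eqP := congr1 (fun T => T k) eqZ.
  by rewrite !ffunE subr_eq0 => /eqP.
have := memvf ([ffun k => tid k] : vT).
rewrite -(lker0_limgf kerf0) => /memv_imgP [N _]; rewrite lfunE => /ffunP eqN.
by exists (fun j => N j); apply: funext => k; have := eqN k; rewrite !ffunE.
Qed.

Lemma tprod_inj_inv (Y : tensor F m m L) :
  (forall Z : tensor F m m L, Y ** Z = 0 -> Z = 0) ->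
  exists N, Y ** N = tid /\ N ** Y = tid.
Proof.
move=> Y_inj; have [N YN] := tprod_inj_rinv Y_inj.
have N_inj (Z : tensor F m m L) : N ** Z = 0 -> Z = 0.
  by move=> NZ0; rewrite -(tprod1l Z) -YN tprodA NZ0 tprod0r.
have [N' NN'] := tprod_inj_rinv N_inj.
exists N; split=> //; suff -> : Y = N' by [].
by rewrite -(tprod1r Y) -NN' -tprodA YN tprod1l.
Qed.

End Invertibility.

Section Gram.
Variables (R : realDomainType) (l : nat).
Local Notation L := l.+1.

Lemma tgram_diagE (n p : nat) (T : tensor R n p L) a :
  (ttr T ** T) 0 a a = \sum_(j < L) \sum_(r < n) T j r a ^+ 2.
Proof.
rewrite tprodE summxE; apply: eq_bigr => j _.
by rewrite ttrE sub0r opprK mxE; apply: eq_bigr => r _; rewrite mxE expr2.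
Qed.

Lemma tgram_diag_ge0 (n p : nat) (T : tensor R n p L) a : 0 <= (ttr T ** T) 0 a a.
Proof. by rewrite tgram_diagE; do 2!apply: sumr_ge0 => ? _; apply: sqr_ge0. Qed.

Lemma sqr_le_tgram_diag (n p : nat) (T : tensor R n p L) k i a :
  T k i a ^+ 2 <= (ttr T ** T) 0 a a.
Proof.
rewrite tgram_diagE (bigD1 k) //= (bigD1 i) //= -addrA lerDl.
by apply: addr_ge0; do ?apply: sumr_ge0 => ? _; apply: sqr_ge0.
Qed.

Lemma tgramD_eq0 (n m p : nat) (P : tensor R n p L) (Q : tensor R m p L) :
  ttr P ** P + ttr Q ** Q = 0 -> P = 0 /\ Q = 0.
Proof.
move=> /(congr1 (fun T => T 0)) /matrixP sum0.
have diag0 a : (ttr P ** P) 0 a a + (ttr Q ** Q) 0 a a = 0.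
  by have := sum0 a a; rewrite !fctE !mxE.
have P0 a : (ttr P ** P) 0 a a = 0.
  by apply/eqP; rewrite eq_le tgram_diag_ge0 andbT -(diag0 a) lerDl tgram_diag_ge0.
have Q0 a : (ttr Q ** Q) 0 a a = 0 by have := diag0 a; rewrite P0 add0r.
split; apply: funext => k; apply/matrixP => i a; apply/eqP;
  rewrite /= mxE -sqrf_eq0 eq_le sqr_ge0 andbT.
  by rewrite -(P0 a) sqr_le_tgram_diag.
by rewrite -(Q0 a) sqr_le_tgram_diag.
Qed.

End Gram.

Section OrthogonalComplement.
Variable R : rcfType.
Local Notation C := R[i].

Definition mxH (m n : nat) (M : 'M[C]_(m, n)) : 'M[C]_(n, m) := (map_mx (@conjc R) M)^T.

(* [P] spans the orthogonal complement of the column space of [A] *)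
Definition orthocomplement (m p q : nat) (A : 'M[C]_(m, p)) (P : 'M[C]_(m, q)) :=
  forall v : 'cV[C]_m,
    (v^T <= P^T)%MS <-> (forall u : 'cV[C]_m, (u^T <= A^T)%MS -> mxH u *m v = 0).

Lemma mxH_mul (m n q : nat) (A : 'M[C]_(m, n)) (B : 'M[C]_(n, q)) :
  mxH (A *m B) = mxH B *m mxH A.
Proof. by rewrite /mxH map_mxM trmx_mul. Qed.

Lemma mxH_mul_self_eq0 (m : nat) (v : 'cV[C]_m) : mxH v *m v = 0 -> v = 0.
Proof.
rewrite /mxH => /matrixP /(_ 0 0); rewrite !mxE => /eqP; rewrite psumr_eq0; last first.
  by move=> j _; rewrite !mxE mulrC mulcJ_ge0.
move=> /allP v0; apply/matrixP => i j; rewrite ord1 mxE; apply/eqP.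
by have := v0 i (mem_index_enum _); rewrite !mxE mulf_eq0 conjc_eq0 orbb.
Qed.

Lemma col_trmx_sub (m n : nat) (A : 'M[C]_(m, n)) j : ((col j A)^T <= A^T)%MS.
Proof. by rewrite tr_col row_sub. Qed.

Lemma submx_trmx_mul (m n : nat) (A : 'M[C]_(m, n)) (v : 'cV[C]_m) :
  (v^T <= A^T)%MS -> exists c : 'cV[C]_n, v = A *m c.
Proof. by case/submxP => D vA; exists D^T; rewrite -[v]trmxK vA trmx_mul trmxK. Qed.

Section Orthocomplement.
Variables (m p q : nat) (A : 'M[C]_(m, p)) (P : 'M[C]_(m, q)).
Hypothesis AP : orthocomplement A P.

Lemma orthocomplement_mul : mxH A *m P = 0.
Proof.
apply/matrixP => a b; rewrite [RHS]mxE.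
have := (proj1 (AP (col b P)) (col_trmx_sub _ _)) _ (col_trmx_sub A a).
move=> /matrixP /(_ 0 0); rewrite !mxE => uv0; rewrite -[RHS]uv0.
by apply: eq_bigr => r _; rewrite !mxE.
Qed.

Lemma orthocomplement_eq0 (r : nat) (M : 'M[C]_(m, r)) :
  mxH A *m M = 0 -> mxH P *m M = 0 -> M = 0.
Proof.
move=> AM0 PM0; apply/matrixP => a c; rewrite [RHS]mxE.
have Av0 : mxH A *m col c M = 0 by rewrite colE mulmxA AM0 mul0mx.
have Pv0 : mxH P *m col c M = 0 by rewrite colE mulmxA PM0 mul0mx.
have /submx_trmx_mul [d Pd] : ((col c M)^T <= P^T)%MS.
  apply/AP => u /submx_trmx_mul [e ->].
  by rewrite mxH_mul -mulmxA Av0 mulmx0.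
have /mxH_mul_self_eq0 /matrixP /(_ a 0) : mxH (col c M) *m col c M = 0.
  by rewrite {1}Pd mxH_mul -mulmxA Pv0 mulmx0.
by rewrite !mxE.
Qed.

End Orthocomplement.
End OrthogonalComplement.

Section RootOfUnity.
Variables (R : realType) (l : nat).
Local Notation L := l.+1.
Local Notation w := (omega R L).
Local Notation theta := (2 * pi / (L%:R : R)).

Lemma omega_expE m : w ^+ m = Complex (cos (m%:R * theta)) (- sin (m%:R * theta)).
Proof.
elim: m => [|m IHm]; first by rewrite expr0 mul0r cos0 sin0 oppr0.
rewrite exprSr IHm /omega; set t := 2 * pi / _.
rewrite -[m.+1]addn1 natrD mulrDl mul1r cosD sinD.
by simpc; congr Complex; ring.
Qed.

Lemma omega_expL : w ^+ L = 1.
Proof.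
rewrite omega_expE mulrC divfK ?pnatr_eq0 //.
have -> : 2 * pi = pi *+ 2 :> R by rewrite mulr_natl.
by rewrite cos2pi sin2pi oppr0.
Qed.

Lemma omega_exp_mod m : w ^+ (m %% L) = w ^+ m.
Proof. exact: expr_mod omega_expL. Qed.

Lemma omega_exp_neq1 m : (0 < m < L)%N -> w ^+ m != 1.
Proof.
case/andP => m_gt0 m_ltL; rewrite omega_expE; apply/eqP => -[cos1 _].
set x := m%:R * theta in cos1.
have sin_half_gt0 : 0 < sin (x / 2).
  apply: sin_gt0_pi; apply/andP; split.
    by rewrite /x divr_gt0 // ?mulr_gt0 ?divr_gt0 ?ltr0n ?pi_gt0.
  have -> : x / 2 = pi * (m%:R / L%:R).
    by rewrite /x; field; rewrite paddr_eq0 ?ler0n // oner_eq0.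
  by rewrite gtr_pMr ?pi_gt0 // ltr_pdivrMr ?ltr0n // mul1r ltr_nat.
(* cos x = 1 - 2 sin^2 (x/2) *)
have : sin (x / 2) ^+ 2 = 0.
  have x2 : x = (x / 2) *+ 2 by rewrite -mulr_natr mulfVK // pnatr_eq0.
  rewrite x2 cos_mulr2n in cos1.
  rewrite sin2cos2; apply/eqP; rewrite subr_eq0; apply/eqP; move/eqP: cos1.
  by rewrite subr_eq addrC -mulr2n -subr_eq0 -mulrnBl mulrn_eq0 /= subr_eq0 => /eqP.
by move/eqP; rewrite sqrf_eq0 => /eqP sin0; rewrite sin0 ltxx in sin_half_gt0.
Qed.

Lemma omega_exp_conj a b : ((a + b) %% L = 0)%N -> (w ^+ a)^*%C = w ^+ b.
Proof.
move=> ab0; have wab : w ^+ a * w ^+ b = 1 by rewrite -exprD -omega_exp_mod ab0.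
have conj_w : (w ^+ a)^*%C * w ^+ a = 1.
  by rewrite omega_expE; simpc; rewrite -!expr2 cos2Dsin2; congr Complex; ring.
by rewrite -[LHS]mulr1 -wab mulrA conj_w mul1r.
Qed.

Lemma omega_exp_addZp k (i j : 'I_L) : w ^+ (k * (i + j)%R) = w ^+ (k * i) * w ^+ (k * j).
Proof.
have -> : val (i + j)%R = ((i + j) %% L)%N by [].
by rewrite -omega_exp_mod modnMmr omega_exp_mod mulnDr exprD.
Qed.

Lemma omega_exp_conjN k (j : 'I_L) : (w ^+ (k * j))^*%C = w ^+ (k * (- j)%R).
Proof.
apply: omega_exp_conj; rewrite -mulnDr -modnMmr.
have -> : ((j + (- j)%R) %% L = 0)%N by rewrite -[LHS]/(val (j - j)) subrr.
by rewrite muln0.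
Qed.

Lemma sum_omega_exp (i j : 'I_L) :
  \sum_(k < L) w ^+ (k * (- i)%R) * w ^+ (k * j) = if j == i then L%:R else 0.
Proof.
have geom k : w ^+ (k * (- i)%R) * w ^+ (k * j) = (w ^+ (j - i)%R) ^+ k.
  by rewrite -omega_exp_addZp -exprM mulnC addrC.
under eq_bigr do rewrite geom.
case: eqP => [->|neq_ji].
  by rewrite subrr expr0; under eq_bigr do rewrite expr1n; rewrite sumr_const card_ord.
have z_neq1 : w ^+ (j - i)%R != 1.
  apply: omega_exp_neq1; rewrite ltn_ord andbT lt0n.
  apply: contra_notN neq_ji => /eqP ji0.
  by apply/eqP; rewrite -subr_eq0; apply/eqP/val_inj.
have := subrX1 (w ^+ (j - i)%R) L.
rewrite -exprM mulnC exprM omega_expL expr1n subrr => /esym/eqP.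
by rewrite mulf_eq0 subr_eq0 (negbTE z_neq1) => /eqP.
Qed.

End RootOfUnity.

Section DFT.
Variables (R : realType) (l : nat).
Local Notation L := l.+1.
Local Notation w := (omega R L).
Local Notation rc := (real_complex R).

Lemma dftE (n p : nat) (A : tensor R n p L) k :
  dft A k = \sum_(j < L) w ^+ (k * j) *: map_mx rc (A j).
Proof. by []. Qed.

Lemma dft0 (n p : nat) k : dft (0 : tensor R n p L) k = 0.
Proof. by rewrite dftE big1 // => j _; rewrite map_mx0 scaler0. Qed.

Lemma dft_tprod (n p q : nat) (A : tensor R n p L) (B : tensor R p q L) k :
  dft (A ** B) k = dft A k *m dft B k.
Proof.
rewrite !dftE mulmx_suml.
under eq_bigr do rewrite tprodE raddf_sum scaler_sumr.
under [RHS]eq_bigr do rewrite mulmx_sumr.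
rewrite exchange_big [RHS]exchange_big /=; apply: eq_bigr => i _.
rewrite (reindex_inj (addIr i)) /=; apply: eq_bigr => j _.
rewrite addrK map_mxM omega_exp_addZp -scalerA -scalemxAl -scalemxAr.
by rewrite scalerA mulrC.
Qed.

Lemma dft_ttr (n p : nat) (A : tensor R n p L) k : dft (ttr A) k = mxH (dft A k).
Proof.
rewrite /mxH !dftE raddf_sum linear_sum /= (reindex_inj (inv_inj (@opprK _))) /=.
have conj_real (M : 'M[R]_(n, p)) : map_mx (@conjc R) (map_mx rc M) = map_mx rc M.
  by apply/matrixP => a b; rewrite !mxE conjc_real.
apply: eq_bigr => j _; rewrite ttrE opprK map_mxZ conj_real linearZ /=.
by rewrite omega_exp_conjN map_trmx.
Qed.

(* invert the transform: multiply slice k by w^(-k j0) and sum over k *)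
Lemma dft_eq0 (n p : nat) (A : tensor R n p L) : (forall k, dft A k = 0) -> A = 0.
Proof.
move=> dftA0; apply: funext => j0; apply/matrixP => a b; rewrite !mxE.
have dft_entry (k : 'I_L) : \sum_(j < L) w ^+ (k * j) * rc (A j a b) = 0.
  transitivity (dft A k a b); last by rewrite dftA0 mxE.
  by rewrite dftE summxE; apply: eq_bigr => j _; rewrite !mxE.
have : \sum_(k < L) w ^+ (k * (- j0)%R) * \sum_(j < L) w ^+ (k * j) * rc (A j a b) = 0.
  by apply: big1 => k _; rewrite dft_entry mulr0.
under eq_bigr do rewrite mulr_sumr.
rewrite exchange_big /=.
under eq_bigr do (under eq_bigr do rewrite mulrA; rewrite -mulr_suml sum_omega_exp).
rewrite (bigD1 j0) //= big1 ?addr0; last by move=> j /negbTE ->; rewrite mul0r.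
by rewrite eqxx => /eqP; rewrite mulf_eq0 pnatr_eq0 /= => /eqP [].
Qed.

End DFT.

Section TensorOrthocomplement.
Variables (R : realType) (n p q l : nat).
Variables (X : tensor R n p l.+1) (Xp : tensor R n q l.+1).
Hypothesis XXp : forall k, orthocomplement (dft X k) (dft Xp k).

Lemma ttr_tprod_orthocomplement : ttr X ** Xp = 0.
Proof. by apply: dft_eq0 => k; rewrite dft_tprod dft_ttr orthocomplement_mul. Qed.

Lemma orthocomplement_tensor_eq0 (r : nat) (Z : tensor R n r l.+1) :
  ttr X ** Z = 0 -> ttr Xp ** Z = 0 -> Z = 0.
Proof.
move=> XZ0 XpZ0; apply: dft_eq0 => k; apply: (orthocomplement_eq0 (XXp k)).
  by rewrite -dft_ttr -dft_tprod XZ0 dft0.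
by rewrite -dft_ttr -dft_tprod XpZ0 dft0.
Qed.

End TensorOrthocomplement.

Section Derivatives.
Variable R : realType.

Lemma is_derive0_locally_constant (f : R -> R) (a d e : R) : 0 < e ->
  (forall t, `|t| < e -> f t = a) -> is_derive (0 : R) (1 : R) f d -> d = 0.
Proof.
move=> e_gt0 fa fd; have <- : 'D_(1 : R) f (0 : R) = d by exact: derive_val.
have -> : 'D_(1 : R) f (0 : R) = 'D_(1 : R) (cst a) (0 : R).
  by apply: near_eq_derive; apply/nbhs_norm0P; exists e.
exact: derive_val.
Qed.

Lemma is_derive0_quadratic_remainder (f g : R -> R) (x v C : R) :
  (forall t, f t = x + t * v + t ^+ 2 * g t) -> (forall t, `|g t| <= C) ->
  is_derive (0 : R) (1 : R) f v.
Proof.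
move=> fE g_le; apply/is_derive1_caratheodory.
exists (fun t => v + t * g t); split.
- by move=> t; rewrite !fE !mul0r expr0n /= mul0r !addr0 subr0; ring.
- have C1_gt0 : 0 < C + 1 by apply: ltr_wpDl ltr01; apply: le_trans (g_le 0).
  apply/cvgrPdist_lt => eps eps_gt0; exists (eps / (C + 1)) => /=.
    by rewrite divr_gt0.
  move=> t /= t_lt; rewrite sub0r normrN in t_lt.
  rewrite mul0r addr0 opprD addNKr normrN normrM.
  apply: (le_lt_trans (y := `|t| * (C + 1))); last by rewrite -ltr_pdivlMr.
  by apply: ler_pM => //; apply: le_trans (g_le t) _; rewrite lerDl.
- by rewrite mul0r addr0.
Qed.

Lemma is_derive_tgram (n p l : nat) (c : R -> tensor R n p l.+1) (V : tensor R n p l.+1)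
    (c'0 : forall k i j, is_derive (0 : R) (1 : R) (fun t => c t k i j) (V k i j)) k a b :
  is_derive (0 : R) (1 : R) (fun t => (ttr (c t) ** c t) k a b)
    ((ttr V ** c 0 + ttr (c 0) ** V) k a b).
Proof.
have -> : (fun t => (ttr (c t) ** c t) k a b) =
    \sum_(j < l.+1) \sum_(r < n) ((fun t => c t (- (k - j)) r a) * (fun t => c t j r b)).
  apply: funext => t; rewrite tprodE summxE fct_sumE; apply: eq_bigr => j _.
  by rewrite mxE fct_sumE; apply: eq_bigr => r _; rewrite ttrE !mxE.
suff -> : (ttr V ** c 0 + ttr (c 0) ** V) k a b =
    \sum_(j < l.+1) \sum_(r < n)
      (c 0 (- (k - j)) r a *: V j r b + c 0 j r b *: V (- (k - j)) r a).
  exact: is_derive_sum (fun j =>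
    is_derive_sum (fun r => is_deriveM (c'0 _ r a) (c'0 j r b))).
rewrite fctE !tprodE mxE !summxE -big_split /=; apply: eq_bigr => j _.
rewrite !mxE -big_split /=; apply: eq_bigr => r _.
by rewrite !ttrE !mxE /GRing.scale /= addrC mulrC [c 0 j r b * _]mulrC.
Qed.

End Derivatives.

Section Cayley.
Variables (R : realType) (n l : nat).
Local Notation L := l.+1.
Local Notation tid := (@tid R n L).
Variable A : tensor R n n L.
Hypothesis A_skew : ttr A = - A.

Definition cayley_den (s : R) := tid - s *: A.
Definition cayley_num (s : R) := tid + s *: A.

Lemma ttr_cayley_den s : ttr (cayley_den s) = cayley_num s.
Proof. by rewrite ttrB ttr_tid ttrZ A_skew scalerN opprK. Qed.

Lemma ttr_cayley_num s : ttr (cayley_num s) = cayley_den s.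
Proof. by rewrite -ttr_cayley_den ttrK. Qed.

Lemma cayley_num_den s : cayley_num s ** cayley_den s = tid - (s * s) *: (A ** A).
Proof.
rewrite tprodDl tprod1l tprodZl tprodBr tprod1r tprodZr scalerBr scalerA.
by rewrite addrA subrK.
Qed.

Lemma cayley_den_num s : cayley_den s ** cayley_num s = tid - (s * s) *: (A ** A).
Proof.
rewrite tprodBl tprod1l tprodZl tprodDr tprod1r tprodZr scalerDr scalerA.
by rewrite opprD addrA addrK.
Qed.

Lemma tgram_cayley_den (m : nat) s (Z : tensor R n m L) :
  ttr (cayley_den s ** Z) ** (cayley_den s ** Z) =
  ttr Z ** Z + ttr (s *: (A ** Z)) ** (s *: (A ** Z)).
Proof.
rewrite ttr_tprod ttr_cayley_den tprodA -[cayley_num s ** _]tprodA cayley_num_den.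
rewrite tprodBl tprod1l tprodZl tprodBr tprodZr ttrZ ttr_tprod A_skew.
by rewrite tprodZl tprodZr tprodNr tprodNl scalerN scalerN scalerA !tprodA.
Qed.

Lemma cayley_den_inj s (Z : tensor R n n L) : cayley_den s ** Z = 0 -> Z = 0.
Proof.
move=> denZ0; have := tgram_cayley_den s Z; rewrite denZ0 ttr0 tprod0r => /esym.
by case/tgramD_eq0.
Qed.

Definition cayley_inv s := sval (cid (tprod_inj_inv (@cayley_den_inj s))).

Lemma cayley_den_inv s : cayley_den s ** cayley_inv s = tid.
Proof. by rewrite /cayley_inv; case: cid => N []. Qed.

Lemma cayley_inv_den s : cayley_inv s ** cayley_den s = tid.
Proof. by rewrite /cayley_inv; case: cid => N []. Qed.

Lemma cayley_inv0 : cayley_inv 0 = tid.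
Proof. by have := cayley_inv_den 0; rewrite /cayley_den scale0r subr0 tprod1r. Qed.

Lemma cayley_inv_num_comm s : cayley_inv s ** cayley_num s = cayley_num s ** cayley_inv s.
Proof.
transitivity (cayley_inv s ** (cayley_num s ** (cayley_den s ** cayley_inv s))).
  by rewrite cayley_den_inv tprod1r.
rewrite -(tprodA (cayley_num s)) cayley_num_den -cayley_den_num tprodA.
by rewrite -[cayley_inv s ** (cayley_den s ** _)]tprodA cayley_inv_den tprod1l.
Qed.

Lemma cayley_inv_entry_bound s k i j : `|cayley_inv s k i j| <= 1.
Proof.
have := tgram_cayley_den s (cayley_inv s).
rewrite cayley_den_inv ttr_tid tprod1l => /(congr1 (fun T : tensor R n n L => T 0 j j)).
rewrite /= tidE eqxx mxE eqxx mulr1n [in RHS]fctE [in RHS]mxE => gram1.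
have : cayley_inv s k i j ^+ 2 <= 1.
  apply: (le_trans (sqr_le_tgram_diag _ k i j)); rewrite gram1 lerDl.
  exact: tgram_diag_ge0.
by move=> sq_le1; rewrite ler_norml; apply/andP; split; nra.
Qed.

Lemma cayley_inv_tprod_entry_bound (m : nat) s (M : tensor R n m L) k i j :
  `|(cayley_inv s ** M) k i j| <= \sum_(a < L) \sum_(r < n) `|M a r j|.
Proof.
rewrite tprodE summxE; apply: (le_trans (ler_norm_sum _ _ _)); apply: ler_sum => a _.
rewrite mxE; apply: (le_trans (ler_norm_sum _ _ _)); apply: ler_sum => r _.
by rewrite normrM ler_piMl ?normr_ge0 ?cayley_inv_entry_bound.
Qed.

Section Curve.
Variables (p : nat) (X V : tensor R n p L).

Definition cayley_curve (t : R) := cayley_inv (t / 2) ** (cayley_num (t / 2) ** X).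

Lemma cayley_curve0 : cayley_curve 0 = X.
Proof. by rewrite /cayley_curve mul0r cayley_inv0 /cayley_num scale0r addr0 !tprod1l. Qed.

Lemma cayley_curve_Stiefel t : Stiefel X -> Stiefel (cayley_curve t).
Proof.
rewrite /Stiefel /= => XX; set s := t / 2.
have curve_comm : cayley_curve t = cayley_num s ** (cayley_inv s ** X).
  by rewrite /cayley_curve -/s -!tprodA cayley_inv_num_comm.
have inv_num : ttr (cayley_inv s) ** cayley_num s = tid.
  by rewrite -ttr_cayley_den -ttr_tprod cayley_den_inv ttr_tid.
rewrite {2}curve_comm {1}/cayley_curve -/s !ttr_tprod ttr_cayley_num.
rewrite !tprodA -[ttr (cayley_inv s) ** _]tprodA inv_num tprod1l.
by rewrite -[cayley_den s ** _]tprodA cayley_den_inv tprod1l.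
Qed.

Hypothesis AX : A ** X = V.

Lemma cayley_curveE t :
  cayley_curve t = X + t *: V + (t * (t / 2)) *: (cayley_inv (t / 2) ** (A ** V)).
Proof.
rewrite /cayley_curve; set s := t / 2; set N := cayley_inv s.
have N_expand (m : nat) (Y : tensor R n m L) : N ** Y = Y + s *: (N ** (A ** Y)).
  have denY : cayley_den s ** Y = Y - s *: (A ** Y) by rewrite tprodBl tprod1l tprodZl.
  apply/eqP; rewrite -subr_eq; apply/eqP.
  by rewrite -tprodZr -tprodBr -denY -tprodA cayley_inv_den tprod1l.
have ss : s + s = t by rewrite /s; field.
rewrite /cayley_num tprodDl tprod1l tprodZl AX tprodDr tprodZr N_expand AX (N_expand _ V).
by rewrite -addrA -scalerDl ss scalerDr scalerA addrA.
Qed.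

Lemma is_derive_cayley_curve k i j :
  is_derive (0 : R) (1 : R) (fun t => cayley_curve t k i j) (V k i j).
Proof.
pose AV := A ** V.
apply: (@is_derive0_quadratic_remainder _ _
  (fun t => 1 / 2 * (cayley_inv (t / 2) ** AV) k i j) (X k i j) _
  (1 / 2 * \sum_(a < L) \sum_(r < n) `|AV a r j|)).
  by move=> t; rewrite cayley_curveE !fctE !mxE; ring.
move=> t; rewrite normrM ger0_norm ?divr_ge0 // ler_pM2l ?divr_gt0 //.
exact: cayley_inv_tprod_entry_bound.
Qed.

End Curve.
End Cayley.

Section SkewLift.
Variables (R : comPzRingType) (n p q l : nat).
Local Notation L := l.+1.
Variables (X : tensor R n p L) (Xp : tensor R n q L).
Variables (W : tensor R p p L) (B : tensor R q p L).

Definition skew_lift := X ** W ** ttr X + Xp ** B ** ttr X - X ** ttr B ** ttr Xp.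

Lemma skew_lift_skew : ttr W = - W -> ttr skew_lift = - skew_lift.
Proof.
move=> W_skew; rewrite /skew_lift ttrB ttrD !ttr_tprod !ttrK W_skew.
by rewrite tprodNl tprodNr !tprodA opprB opprD addrCA addrA.
Qed.

Lemma skew_lift_tprod : ttr X ** X = @tid R p L -> ttr Xp ** X = 0 ->
  skew_lift ** X = X ** W + Xp ** B.
Proof.
move=> XX XpX.
by rewrite /skew_lift !tprodDl tprodNl !tprodA XX XpX !tprod0r subr0 !tprod1r.
Qed.

End SkewLift.

Section TangentSpace.
Variables (R : realType) (n p q l : nat).
Local Notation L := l.+1.
Variables (X : tensor R n p L) (Xp : tensor R n q L).
Hypothesis XX : Stiefel X.
Hypothesis XXp : forall k, orthocomplement (dft X k) (dft Xp k).

Lemma tangent_Stiefel_skew V :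
  tangent_space (@Stiefel R n p L) X V -> ttr V ** X + ttr X ** V = 0.
Proof.
case=> c [c0 [e e_gt0 c_St] c'0]; apply: funext => k; apply/matrixP => a b.
rewrite -c0 [RHS]mxE.
apply: (is_derive0_locally_constant e_gt0 _ (is_derive_tgram c'0 k a b)).
by move=> t /c_St c_t_St /=; rewrite c_t_St.
Qed.

Lemma frame_decomposition (r : nat) (Y : tensor R n r L) :
  exists Z, Y = X ** (ttr X ** Z) + Xp ** (ttr Xp ** Z).
Proof.
pose G := X ** ttr X + Xp ** ttr Xp.
have G_inj (Z : tensor R n n L) : G ** Z = 0 -> Z = 0.
  move=> GZ0; have [XZ0 XpZ0] : ttr X ** Z = 0 /\ ttr Xp ** Z = 0.
    apply: tgramD_eq0; rewrite !ttr_tprod !ttrK !tprodA -tprodDr.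
    by rewrite -[X ** _]tprodA -[Xp ** _]tprodA -tprodDl GZ0 tprod0r.
  exact: (orthocomplement_tensor_eq0 XXp XZ0 XpZ0).
have [M [GM _]] := tprod_inj_inv G_inj.
by exists (M ** Y); rewrite -!tprodA -!tprodDl GM tprod1l.
Qed.

Lemma tangent_Stiefel_sub V : tangent_space (@Stiefel R n p L) X V ->
  exists W B, tskew W /\ V = X ** W + Xp ** B.
Proof.
move=> /tangent_Stiefel_skew VX.
have [Z VZ] := frame_decomposition V.
have XV : ttr X ** V = ttr X ** Z.
  rewrite VZ tprodDr -!tprodA XX (ttr_tprod_orthocomplement XXp) !tprod0l addr0.
  by rewrite tprod1l.
exists (ttr X ** Z), (ttr Xp ** Z); split=> //.
by rewrite /tskew -XV ttr_tprod ttrK; apply/eqP; rewrite -addr_eq0 VX.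
Qed.

Lemma tangent_Stiefel_sup W B : tskew W ->
  tangent_space (@Stiefel R n p L) X (X ** W + Xp ** B).
Proof.
move=> W_skew.
have XpX : ttr Xp ** X = 0.
  by rewrite -[X]ttrK -ttr_tprod (ttr_tprod_orthocomplement XXp) ttr0.
have A_skew := skew_lift_skew X Xp B W_skew.
exists (cayley_curve A_skew X); split.
- exact: cayley_curve0.
- by exists 1 => // t _; exact: cayley_curve_Stiefel.
- exact/is_derive_cayley_curve/skew_lift_tprod.
Qed.

End TangentSpace.

Unset Implicit Arguments.
Local Open Scope classical_set_scope.

Theorem mainTheorem2 (R : realType) (n p l : nat) (hpn : (p <= n)%N)
  (X : tensor R n p l) (hX : Stiefel X)
  (Xperp : tensor R n (n - p) l)
  (hperp : forall (k : 'I_l) (v : 'cV[R[i]]_n),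
     ((v^T <= (dft Xperp k)^T)%MS <->
      (forall u : 'cV[R[i]]_n, (u^T <= (dft X k)^T)%MS ->
         (map_mx (@conjc R) u)^T *m v = 0))) :
  tangent_space (@Stiefel R n p l) X =
  [set V : tensor R n p l | exists (W : tensor R p p l) (B : tensor R (n - p) p l),
     tskew W /\ V = tadd (tprod X W) (tprod Xperp B)].
Proof.
(* Without frontal slices ([l = 0]) all tensors are equal. *)
case: l X hX Xperp hperp => [|l] X hX Xperp hperp; apply/seteqP; split=> V /=.
- by move=> _; exists 0, 0; split; apply: funext => -[].
- by move=> _; exists (fun=> X); split=> //; [exists 1 => // | case].
- exact: tangent_Stiefel_sub.
- by case=> W [B [W_skew ->]]; exact: tangent_Stiefel_sup.
Qed.
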